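(* Let $T$ and $T'$ be two proper caterpillars with the same $U$-polynomial. Then for any $\beta\in\Phi(T)$ and $\beta'\in\Phi(T')$, $\mathcal{L}(\beta,\mathbf{x})=\mathcal{L}(\beta',\mathbf{x})$.
   Context: Let $\mathbf{x}=x_1,x_2,\ldots$ be commuting indeterminates and $\mathbf{x}_\lambda=x_{\lambda_1}\cdots x_{\lambda_l}$ for a partition $\lambda$. For a tree $T=(V,E)$, $U_T(\mathbf{x})=\sum_{A\subseteq E}\mathbf{x}_{\lambda(A)}$, where $\lambda(A)$ is the partition of $|V|$ formed by the component sizes of $(V,A)$. A composition is a finite nonempty sequence of positive integers; its type $\lambda(\alpha)$ is its parts sorted decreasingly; $\alpha\succeq\beta$ ($\alpha$ is a coarsening of $\beta$) if $\alpha$ arises from $\beta$ by summing blocks of consecutive parts; $\mathcal{L}(\beta,\mathbf{x})=\sum_{\alpha\succeq\beta}\mathbf{x}_{\lambda(\alpha)}$. A caterpillar is a tree whose internal vertices induce a non-trivial path (the spine); it is proper if every internal vertex is adjacent to a leaf. For a proper caterpillar with spine $v_1\cdots v_k$, $\beta_i$ is $1$ plus the number of leaves adjacent to $v_i$, and $\Phi(T)=\{\beta_1\cdots\beta_k,\ \beta_k\cdots\beta_1\}$. *)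

From mathcomp Require Import all_boot.
Set Implicit Arguments. Unset Strict Implicit. Unset Printing Implicit Defensive.

Section Graphs.
Variables (V : finType) (e : rel V).

Definition simple_graph : Prop := symmetric e /\ irreflexive e.

Definition acyclic : Prop :=
  ~ exists (x : V) (p : seq V),
      [/\ uniq (x :: p), 2 <= size p, path e x p & e (last x p) x].

Definition is_tree : Prop := (forall x y : V, connect e x y) /\ acyclic.

Definition edges : {set {set V}} := [set [set x; y] | x in [set: V], y in [set z | e x z]].

Definition sub_rel (A : {set {set V}}) : rel V := fun x y => [set x; y] \in A.

Definition components (A : {set {set V}}) : {set {set V}} :=
  [set [set y | connect (sub_rel A) x y] | x : V].

Definition lambdaA (A : {set {set V}}) : seq nat :=
  sort geq [seq #|C| | C : {set V} <- enum (components A)].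

(* U_T(x) = sum_{A subset E} x_{lambda(A)}, represented by its coefficient
   function: coefficient of the monomial x_la is #{A subset E | lambda(A) = la}. *)
Definition Ucoef (la : seq nat) : nat :=
  #|[set A in powerset edges | lambdaA A == la]|.

Definition deg (v : V) : nat := #|[set w | e v w]|.
Definition leaf (v : V) : bool := deg v == 1.
Definition internal (v : V) : bool := 1 < deg v.

Definition is_spine (s : seq V) : Prop :=
  [/\ uniq s, s != [::], (forall v, (v \in s) = internal v) &
      forall (x0 : V) (i j : nat), i < size s -> j < size s ->
        e (nth x0 s i) (nth x0 s j) = (i.+1 == j) || (j.+1 == i)].

Definition caterpillar : Prop := exists s, is_spine s.

Definition proper_caterpillar : Prop :=
  forall v, internal v -> exists w, e v w && leaf w.

Definition beta (s : seq V) : seq nat :=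
  [seq #|[set w | e v w & leaf w]|.+1 | v <- s].

(* Phi(T) = { beta_1..beta_k , beta_k..beta_1 }: the beta-words of the two
   orientations of the spine. *)
Definition Phi (b : seq nat) : Prop := exists s, is_spine s /\ b = beta s.

End Graphs.

Fixpoint coarsens (alpha b : seq nat) : bool :=
  match alpha with
  | [::] => b == [::]
  | a :: alpha' =>
      has (fun k => (sumn (take k b) == a) && coarsens alpha' (drop k b))
          (iota 1 (size b))
  end.

(* all sequences of length <= len with entries <= bound (every coarsening of
   b lies among those with len = size b, bound = sumn b) *)
Fixpoint bounded_seqs (len bound : nat) : seq (seq nat) :=
  match len with
  | 0 => [:: [::]]
  | l.+1 => [::] :: [seq a :: s | a <- iota 0 bound.+1, s <- bounded_seqs l bound]
  end.

(* L(b, x) = sum_{alpha coarsening of b} x_{lambda(alpha)}, via its coefficient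
   function: coefficient of x_la = number of distinct alpha >= b with
   sorted-decreasing type la. *)
Definition Lcoef (b : seq nat) (la : seq nat) : nat :=
  count (fun alpha => coarsens alpha b && (sort geq alpha == la))
        (undup (bounded_seqs (size b) (sumn b))).

(* Every part of the beta-word of a proper caterpillar is at least 2, so a
   coarsening of it is determined by the set of cuts between consecutive spine
   vertices, and it never has a part 1.  Keeping all leaf edges and the uncut
   spine edges turns such a cut set into an edge set whose components have
   exactly the sizes of the coarsening; conversely, an edge set with no
   singleton component must keep every leaf edge, so it arises this way.
   Hence the coefficient of x_la in L(beta, x) is the coefficient of x_la in
   U_T when 1 is not a part of la, and 0 otherwise: it is determined by U_T. *)
From mathcomp Require Import all_boot zify.
Set Implicit Arguments. Unset Strict Implicit. Unset Printing Implicit Defensive.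

Definition add_head (x : nat) (r : seq nat) :=
  if r is y :: r' then (x + y) :: r' else [:: x].

(* [glue b c] sums consecutive parts of [b], closing a block right after
   [b_i] exactly when [c_i] is true; the cut vectors [c] of length
   [size b - 1] parametrize the coarsenings of [b]. *)
Fixpoint glue (b : seq nat) (c : seq bool) : seq nat :=
  match b with
  | [::] => [::]
  | x :: b' => if head false c then x :: glue b' (behead c)
               else add_head x (glue b' (behead c))
  end.

Lemma glue_neq_nil b c : b != [::] -> glue b c != [::].
Proof.
case: b => [//|x b] _ /=; case: ifP => //.
by rewrite /add_head; case: (glue _ _).
Qed.

Lemma coarsens_cons a al x b :
  coarsens (a :: al) (x :: b) =
  ((x == a) && coarsens al b) || ((x <= a) && coarsens ((a - x) :: al) b).
Proof.
rewrite /=; congr (_ || _); first by rewrite take0 drop0 addn0.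
rewrite -[2]/(1 + 1) iotaDl has_map /preim /=.
case: (leqP x a) => le_xa /=.
  by apply: eq_has => k /=; rewrite -[in LHS](subnK le_xa) addnC eqn_add2r.
apply/hasP => -[k _ /andP[/eqP sum_k _]].
by move: le_xa; rewrite -sum_k ltnNge leq_addr.
Qed.

Lemma coarsensP al b :
  reflect (exists c : seq bool, size c = (size b).-1 /\ al = glue b c)
          (coarsens al b).
Proof.
elim: b al => [|x b IH] al.
  case: al => [|a al] /=; first by apply: ReflectT; exists [::].
  by apply: ReflectF => -[c [_]].
case: al => [|a al].
  by apply: ReflectF => -[c [_ /esym/eqP]]; rewrite (negbTE (glue_neq_nil c _)).
rewrite coarsens_cons; apply: (iffP idP).
  case/orP => /andP[x_a /IH [c' [size_c' al_c']]].
    rewrite (eqP x_a) al_c'.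
    case: b IH size_c' al_c' => [|y b] _ size_c' _; first by exists [::].
    by exists (true :: c'); rewrite /= size_c'.
  exists (false :: c').
  case: b IH size_c' al_c' => [//|y b] _ size_c' al_c'.
  split; first by rewrite /= size_c'.
  change (a :: al = add_head x (glue (y :: b) c')).
  by rewrite -al_c' /= subnKC.
move=> [c [size_c]].
case: b IH size_c => [|y b] IH size_c.
  by case: c size_c => //= _ [-> ->]; rewrite eqxx.
case: c size_c => [//|h c] [size_c] al_c.
have : a :: al = if h then x :: glue (y :: b) c else add_head x (glue (y :: b) c).
  by rewrite al_c; case: (h).
clear al_c; case: h => [[-> ->]|].
  by rewrite eqxx; apply/orP; left; apply/IH; exists c; rewrite /= size_c.
case g_c: (glue (y :: b) c) => [|z r].
  by move: (glue_neq_nil c (isT : y :: b != [::])); rewrite g_c.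
move=> [-> ->]; apply/orP; right; rewrite leq_addr addKn.
by apply/IH; exists c; rewrite g_c /= size_c.
Qed.

Lemma sumn_glue b c : sumn (glue b c) = sumn b.
Proof.
elim: b c => [//|x b IH] c /=; case: ifP => _ /=; first by rewrite IH.
rewrite -(IH (behead c)); case: (glue _ _) => //= y r; by rewrite addnA.
Qed.

Lemma size_glue_leq b c : size (glue b c) <= size b.
Proof.
elim: b c => [//|x b IH] c /=; case: ifP => _ /=; first by rewrite ltnS IH.
by have := IH (behead c); case: (glue _ _) => //= y r /ltnW.
Qed.

Lemma all_glue_geq n b c :
  all (fun x => n <= x) b -> all (fun x => n <= x) (glue b c).
Proof.
elim: b c => [//|x b IH] c /= /andP[n_x n_b]; case: ifP => _ /=.
  by rewrite n_x IH.
have := IH (behead c) n_b; case: (glue _ _) => /= [|y r]; first by rewrite n_x.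
by case/andP => n_y ->; rewrite (leq_trans n_y) ?leq_addl.
Qed.

Lemma glue_inj b c1 c2 : all (fun x => 0 < x) b ->
  size c1 = (size b).-1 -> size c2 = (size b).-1 ->
  glue b c1 = glue b c2 -> c1 = c2.
Proof.
elim: b c1 c2 => [|x b IH] c1 c2 /=; first by case: c1 => //; case: c2.
case/andP=> x_pos b_pos.
case: b IH b_pos => [|y b] IH b_pos; first by case: c1 => //; case: c2.
case: c1 => [//|h1 c1]; case: c2 => [//|h2 c2] [size_c1] [size_c2] E.
have : (if h1 then x :: glue (y :: b) c1 else add_head x (glue (y :: b) c1)) =
       (if h2 then x :: glue (y :: b) c2 else add_head x (glue (y :: b) c2)).
  by move: E; case: (h1); case: (h2).
clear E.
have := all_glue_geq c1 b_pos; have := all_glue_geq c2 b_pos.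
have := glue_neq_nil c1 (isT : y :: b != [::]).
have := glue_neq_nil c2 (isT : y :: b != [::]).
have IHc := IH c1 c2 b_pos size_c1 size_c2.
move: IHc.
case: (glue (y :: b) c1) => [//|z1 r1]; case: (glue (y :: b) c2) => [//|z2 r2].
move=> IHc _ _ /= /andP[z2_pos _] /andP[z1_pos _].
case: h1; case: h2 => //= -[E1 E2].
- by rewrite IHc // E1 E2.
- lia.
- lia.
- by move/eqP: E1; rewrite eqn_add2l => /eqP E1; rewrite IHc // E1 E2.
Qed.

Lemma mem_bounded_seqs (al : seq nat) len bound :
  size al <= len -> all (fun a => a <= bound) al -> al \in bounded_seqs len bound.
Proof.
elim: len al => [|l IH] [|a al] //= size_al /andP[a_le al_le].
change (a :: al \in [::] ::
  [seq a :: s | a <- iota 0 bound.+1, s <- bounded_seqs l bound]).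
rewrite in_cons; apply/orP; right.
apply: (allpairs_f (fun a s => a :: s)); last exact: IH.
by rewrite mem_iota add0n ltnS.
Qed.

Lemma all_leq_sumn (s : seq nat) : all (fun a => a <= sumn s) s.
Proof.
elim: s => //= x s IH; rewrite leq_addr /=.
by apply: sub_all IH => a /leq_trans; apply; rewrite leq_addl.
Qed.

Lemma Lcoef_card b la : all (fun x => 0 < x) b ->
  Lcoef b la = #|[set c : ((size b).-1).-tuple bool | sort geq (glue b c) == la]|.
Proof.
move=> b_pos; rewrite /Lcoef.
set L := undup _.
set S := [seq glue b (tval c) | c <- enum {: ((size b).-1).-tuple bool}].
have uniq_S : uniq S.
  rewrite map_inj_in_uniq ?enum_uniq // => c1 c2 _ _ E.
  by apply: val_inj; apply: glue_inj E => //; rewrite size_tuple.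
have perm_LS : perm_eq [seq x <- L | coarsens x b] S.
  apply: uniq_perm => //; first by rewrite filter_uniq // undup_uniq.
  move=> al; rewrite mem_filter mem_undup; apply/andP/mapP.
    case=> /coarsensP [c [size_c ->]] _.
    by exists (Tuple (introT eqP size_c)); rewrite ?mem_enum.
  case=> c _ ->; split; first by apply/coarsensP; exists c; rewrite size_tuple.
  apply: mem_bounded_seqs; first exact: size_glue_leq.
  by rewrite -(sumn_glue b c); apply: all_leq_sumn.
rewrite (eq_count (a2 := predI (fun al => sort geq al == la) (coarsens^~ b))); last first.
  by move=> al /=; rewrite andbC.
rewrite -count_filter (permP perm_LS) count_map cardE -size_filter.
rewrite /enum_mem -enumT filter_map size_map; congr size.
by apply: eq_filter => c /=; rewrite inE.
Qed.

Definition block_sum (b : seq nat) (c : seq bool) (j : nat) :=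
  \sum_(0 <= i < size b) (if count id (take i c) == j then nth 0 b i else 0).

Lemma count_takeS (c : seq bool) i :
  count id (take i.+1 c) = head false c + count id (take i (behead c)).
Proof. by case: c. Qed.

Lemma nth_add_head x r j :
  nth 0 (add_head x r) j = (if j == 0 then x else 0) + nth 0 r j.
Proof. by case: r => [|y r]; case: j => [|[|j]] //=; rewrite ?addn0. Qed.

Lemma nth_glue b c j : nth 0 (glue b c) j = block_sum b c j.
Proof.
rewrite /block_sum; elim: b c j => [|x b IH] c j /=.
  by rewrite big_geq // nth_nil.
rewrite big_nat_recl // take0 /=.
under eq_bigr => i _ do rewrite count_takeS.
case: ifP => c0.
  case: j => [|j] /=; first by rewrite big1 ?addn0 // => i _; rewrite add1n.
  by rewrite add0n IH; apply: eq_bigr => i _; rewrite add1n eqSS.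
by rewrite nth_add_head IH eq_sym; congr (_ + _); apply: eq_bigr.
Qed.

Lemma size_glue b c : b != [::] ->
  size (glue b c) = (count id (take (size b).-1 c)).+1.
Proof.
elim: b c => [//|x b IH] c _.
case: b IH => [|y b] IH; first by rewrite /= take0; case: ifP.
rewrite [(size _).-1]/= count_takeS.
have -> : glue [:: x, y & b] c = if head false c then x :: glue (y :: b) (behead c)
              else add_head x (glue (y :: b) (behead c)) by [].
have := IH (behead c) isT.
have := glue_neq_nil (behead c) (isT : y :: b != [::]).
case: (glue (y :: b) (behead c)) => [//|z r] _ /= size_zr.
by case: ifP => /= _; rewrite size_zr.
Qed.

Lemma glue_block_sum b c : b != [::] -> size c = (size b).-1 ->
  glue b c = [seq block_sum b c j | j <- iota 0 (count id c).+1].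
Proof.
move=> b_nil size_c.
have size_g : size (glue b c) = (count id c).+1.
  by rewrite size_glue // -size_c take_size.
apply: (@eq_from_nth _ 0); first by rewrite size_map size_iota.
move=> j; rewrite size_g => lt_j.
by rewrite nth_glue (nth_map 0) ?size_iota // nth_iota.
Qed.

Lemma exists_count_take (c : seq bool) j : j <= count id c ->
  exists2 i, i <= size c & count id (take i c) = j.
Proof.
elim: c j => [|h t IH] j /=; first by rewrite leqn0 => /eqP ->; exists 0.
case: j => [|j] le_j; first by exists 0; rewrite ?take0.
case: h le_j => /= le_j.
  by have [i le_i <-] := IH j le_j; exists i.+1.
by have [i le_i <-] := IH j.+1 le_j; exists i.+1.
Qed.

Lemma eq_set2 (T : finType) (a b x y : T) :
  [set a; b] = [set x; y] -> (a = x /\ b = y) \/ (a = y /\ b = x).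
Proof.
move=> E.
have : a \in [set x; y] by rewrite -E !inE eqxx.
have : b \in [set x; y] by rewrite -E !inE eqxx orbT.
have : x \in [set a; b] by rewrite E !inE eqxx.
have : y \in [set a; b] by rewrite E !inE eqxx orbT.
rewrite !inE.
by do 4! case/orP=> /eqP ?; subst; auto.
Qed.

Lemma connect_stable (T : finType) (r : rel T) (P : pred T) x y :
  (forall a b, r a b -> P a -> P b) -> P x -> connect r x y -> P y.
Proof.
move=> rP Px /connectP [p r_p ->]; elim: p x Px r_p => //= z p IH x Px.
by case/andP => r_xz; apply: IH (rP _ _ r_xz Px).
Qed.

Lemma minnSn n : minn n n.+1 = n. Proof. exact/minn_idPl. Qed.
Lemma minSnn n : minn n.+1 n = n. Proof. exact/minn_idPr. Qed.

Section Spine.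
Variables (V : finType) (e : rel V).
Hypothesis e_sym : symmetric e.
Hypothesis e_connected : forall x y, connect e x y.
Variable s : seq V.
Hypothesis s_spine : is_spine e s.
Variable x0 : V.

Let uniq_s : uniq s. Proof. by case: s_spine. Qed.
Let s_neq_nil : s != [::]. Proof. by case: s_spine. Qed.
Let mem_s v : (v \in s) = internal e v. Proof. by case: s_spine. Qed.
Let spine_edge i j : i < size s -> j < size s ->
  e (nth x0 s i) (nth x0 s j) = (i.+1 == j) || (j.+1 == i).
Proof. by case: s_spine => _ _ _; apply. Qed.

Definition spine_at i := nth x0 s i.

(* For a vertex off the spine: its unique neighbour. *)
Definition parent x := odflt x [pick u | e x u].

Definition spine_pos x := if x \in s then index x s else index (parent x) s.

Lemma exists_mem_spine : exists v, v \in s.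
Proof. by move: s_neq_nil; case: s => // v r _; exists v; rewrite mem_head. Qed.

Lemma deg_notin_spine x : x \notin s -> deg e x = 1.
Proof.
rewrite mem_s /internal -leqNgt => deg_le1.
apply/eqP; rewrite eqn_leq deg_le1 /= lt0n; apply/negP => /eqP/cards0_eq nbr0.
have [v vs] := exists_mem_spine.
have /eqP v_x : v == x.
  apply: (@connect_stable _ e (pred1 x) x) (e_connected x v); last exact: eqxx.
  move=> a b e_ab /eqP a_x; subst a.
  by have := in_set0 b; rewrite -nbr0 inE e_ab.
by move: vs; rewrite v_x mem_s /internal /deg nbr0 cards0.
Qed.

Lemma parent_spec x : x \notin s ->
  e x (parent x) /\ forall u, e x u -> u = parent x.
Proof.
move=> /deg_notin_spine; rewrite /deg => /eqP/cards1P [u nbr_u].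
have e_x w : e x w = (w == u) by rewrite -in_set1 -nbr_u inE.
rewrite /parent; case: pickP => [v /= e_xv|/(_ u)]; last by rewrite /= e_x eqxx.
by move: e_xv; rewrite e_x => /eqP ->; split => // w; rewrite e_x => /eqP.
Qed.

Lemma parent_mem x : x \notin s -> parent x \in s.
Proof.
move=> xs; apply/negPn/negP => ps.
have [e_xp Ux] := parent_spec xs; have [_ Up] := parent_spec ps.
have x_pp : x = parent (parent x) by apply: Up; rewrite e_sym.
have [v vs] := exists_mem_spine.
have : (v == x) || (v == parent x).
  apply: (@connect_stable _ e [pred z | (z == x) || (z == parent x)] x)
    (e_connected x v); last by rewrite /= eqxx.
  move=> a b e_ab /orP [] /eqP a_eq; subst a.
    by rewrite /= (Ux _ e_ab) eqxx orbT.
  by rewrite /= (Up _ e_ab) -x_pp eqxx.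
by case/orP => /eqP v_eq; subst v; rewrite vs in xs ps.
Qed.

Lemma spine_pos_lt x : spine_pos x < size s.
Proof.
rewrite /spine_pos; case: ifP => xs; rewrite index_mem //.
by apply: parent_mem; rewrite xs.
Qed.

Lemma spine_at_pos x : spine_at (spine_pos x) = if x \in s then x else parent x.
Proof.
rewrite /spine_at /spine_pos; case: ifP => xs; rewrite nth_index //.
by apply: parent_mem; rewrite xs.
Qed.

Lemma spine_pos_at i : i < size s -> spine_pos (spine_at i) = i.
Proof. by move=> lt_i; rewrite /spine_pos /spine_at mem_nth // index_uniq. Qed.

Lemma spine_at_mem i : i < size s -> spine_at i \in s.
Proof. exact: mem_nth. Qed.

Lemma leaf_notin_spine w : leaf e w -> w \notin s.
Proof. by rewrite mem_s /leaf /internal => /eqP ->. Qed.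

Lemma notin_spine_leaf w : w \notin s -> leaf e w.
Proof. by move/deg_notin_spine; rewrite /leaf => ->. Qed.

Lemma edge_in_spine x y : e x y -> x \in s -> y \in s ->
  spine_pos y = (spine_pos x).+1 \/ spine_pos x = (spine_pos y).+1.
Proof.
move=> e_xy xs ys.
have := spine_edge (spine_pos_lt x) (spine_pos_lt y).
rewrite -/(spine_at (spine_pos x)) -/(spine_at (spine_pos y)) !spine_at_pos xs ys e_xy.
by case/esym/orP => /eqP ->; auto.
Qed.

Lemma edge_off_spine x y : e x y -> y \notin s ->
  spine_pos y = spine_pos x /\ x \in s.
Proof.
move=> e_xy ys; have [_ Uy] := parent_spec ys.
have x_p : x = parent y by apply: Uy; rewrite e_sym.
have xs : x \in s by rewrite x_p parent_mem.
by rewrite /spine_pos xs (negbTE ys) -x_p.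
Qed.

Section Cut.
Variable c : seq bool.

(* Index of the block of [glue (beta e s) c] containing spine position [i]. *)
Definition block_of i := count id (take i c).

Lemma block_ofS i : block_of i.+1 = block_of i + nth false c i.
Proof.
rewrite /block_of; elim: c i => [|h t IH] [|i] /=; rewrite ?take0 ?addn0 //.
by rewrite IH addnA.
Qed.

Lemma block_of_mono i d : block_of i <= block_of (i + d).
Proof.
elim: d => [|d IH]; first by rewrite addn0.
by rewrite addnS block_ofS (leq_trans IH) ?leq_addr.
Qed.

Definition uncut x y :=
  ~~ [&& x \in s, y \in s & nth false c (minn (spine_pos x) (spine_pos y))].

Lemma uncutC x y : uncut x y = uncut y x.
Proof. by rewrite /uncut minnC; case: (x \in s); case: (y \in s). Qed.

(* All leaf edges, and the spine edges [v_i v_(i+1)] with [c_i] false. *)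
Definition cut_edges :=
  [set [set x; y] | x in [set: V], y in [set z | e x z && uncut x z]].

Lemma mem_cut_edges x y : ([set x; y] \in cut_edges) = e x y && uncut x y.
Proof.
apply/imset2P/idP; last by move=> uv; exists x y; rewrite ?inE.
case=> a b _; rewrite inE => /andP[e_ab u_ab] /eq_set2 [[-> ->]|[-> ->]] //.
by rewrite e_sym uncutC e_ab.
Qed.

Lemma sub_rel_cut_sym : symmetric (sub_rel cut_edges).
Proof. by move=> x y; rewrite /sub_rel !mem_cut_edges e_sym uncutC. Qed.

Lemma sub_rel_cut_block x y :
  sub_rel cut_edges x y -> block_of (spine_pos x) = block_of (spine_pos y).
Proof.
rewrite /sub_rel mem_cut_edges => /andP[e_xy u_xy].
case xs: (x \in s); case ys: (y \in s).
- move: u_xy; rewrite /uncut xs ys /=.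
  by case: (edge_in_spine e_xy xs ys) => ->; rewrite ?minnSn ?minSnn block_ofS
     => /negbTE ->; rewrite addn0.
- by case: (edge_off_spine e_xy (negbT ys)) => ->.
- by rewrite e_sym in e_xy; case: (edge_off_spine e_xy (negbT xs)) => ->.
- by case: (edge_off_spine e_xy (negbT ys)); rewrite xs.
Qed.

Lemma connect_spine_at_pos x : connect (sub_rel cut_edges) x (spine_at (spine_pos x)).
Proof.
rewrite spine_at_pos; case: ifP => xs; first exact: connect0.
apply: (@connect1 _ (sub_rel cut_edges)); rewrite /sub_rel mem_cut_edges /uncut xs.
by have [-> _] := parent_spec (negbT xs).
Qed.

Lemma connect_spine_at i d : i + d < size s -> block_of i = block_of (i + d) ->
  connect (sub_rel cut_edges) (spine_at i) (spine_at (i + d)).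
Proof.
elim: d i => [|d IH] i; first by rewrite addn0 => _ _; exact: connect0.
move=> lt_id b_id.
have c_i : nth false c i = false.
  move: (block_of_mono i.+1 d); rewrite addSnnS -b_id block_ofS.
  by case: (nth false c i); rewrite ?addn1 ?ltnn.
have lt_i : i.+1 < size s by apply: leq_ltn_trans lt_id; rewrite addnS ltnS leq_addr.
apply: (connect_trans (y := spine_at i.+1)).
  apply: (@connect1 _ (sub_rel cut_edges)).
  rewrite /sub_rel mem_cut_edges spine_edge ?eqxx ?(ltnW lt_i) //=.
  by rewrite /uncut !spine_at_mem ?spine_pos_at ?minnSn ?c_i ?(ltnW lt_i).
rewrite -addSnnS; apply: IH; rewrite addSnnS //.
by rewrite -b_id block_ofS c_i addn0.
Qed.

Lemma connect_cut_edges x y :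
  connect (sub_rel cut_edges) x y = (block_of (spine_pos x) == block_of (spine_pos y)).
Proof.
apply/idP/eqP.
  move=> /connectP [p p_path ->]; elim: p x p_path => //= z p IH x.
  by case/andP => /sub_rel_cut_block -> /IH.
have sym_conn := sym_connect_sym sub_rel_cut_sym.
wlog le_xy : x y / spine_pos x <= spine_pos y.
  move=> W; case: (leqP (spine_pos x) (spine_pos y)) => [|/ltnW] le; first exact: W.
  by move=> b_xy; rewrite sym_conn; apply: W.
move=> b_xy.
apply: (connect_trans (connect_spine_at_pos x)).
rewrite sym_conn; apply: (connect_trans (connect_spine_at_pos y)); rewrite sym_conn.
rewrite -(subnKC le_xy); apply: connect_spine_at; rewrite subnKC //.
exact: spine_pos_lt.
Qed.

Hypothesis size_c : size c = (size s).-1.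

Definition block_set j := [set y | block_of (spine_pos y) == j].

Lemma block_of_leq i : block_of i <= count id c.
Proof. by rewrite /block_of -{2}(cat_take_drop i c) count_cat leq_addr. Qed.

Lemma block_of_onto j : j <= count id c -> exists2 i, i < size s & block_of i = j.
Proof.
move=> /exists_count_take [i le_i b_i]; exists i => //.
by move: le_i s_neq_nil; rewrite size_c; case: (s).
Qed.

Lemma perm_components_cut :
  perm_eq (enum (components cut_edges)) [seq block_set j | j <- iota 0 (count id c).+1].
Proof.
have comp_x x :
    [set y | connect (sub_rel cut_edges) x y] = block_set (block_of (spine_pos x)).
  by apply/setP => y; rewrite !inE connect_cut_edges eq_sym.
apply: uniq_perm; first exact: enum_uniq.
  rewrite map_inj_in_uniq ?iota_uniq // => j1 j2.
  rewrite !mem_iota !add0n !ltnS => /block_of_onto [i lt_i b_i] _ E.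
  have : spine_at i \in block_set j1 by rewrite inE spine_pos_at // b_i.
  by rewrite E inE spine_pos_at // b_i => /eqP.
move=> C; rewrite mem_enum; apply/imsetP/mapP.
  case=> x _ ->; exists (block_of (spine_pos x)); last exact: comp_x.
  by rewrite mem_iota add0n ltnS block_of_leq.
case=> j; rewrite mem_iota add0n ltnS => /block_of_onto [i lt_i b_i] ->.
by exists (spine_at i) => //; rewrite comp_x spine_pos_at // b_i.
Qed.

(* The vertices at spine position [i]: [v_i] and its leaves. *)
Lemma card_spine_pos i : i < size s ->
  #|[set y | spine_pos y == i]| = nth 0 (beta e s) i.
Proof.
move=> lt_i; rewrite /beta (nth_map x0) // -/(spine_at i).
have v_nleaf : leaf e (spine_at i) = false.
  by apply/negP => /leaf_notin_spine; rewrite spine_at_mem.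
suff -> : [set y | spine_pos y == i] =
          spine_at i |: [set w | e (spine_at i) w & leaf e w].
  by rewrite cardsU1 inE v_nleaf andbF add1n.
apply/setP => y; rewrite !inE.
case ys: (y \in s).
  have -> : leaf e y = false by apply/negP => /leaf_notin_spine; rewrite ys.
  rewrite andbF orbF; apply/eqP/eqP => [<-|->]; last exact: spine_pos_at.
  by rewrite spine_at_pos ys.
have -> : leaf e y by apply: notin_spine_leaf; rewrite ys.
have -> : (y == spine_at i) = false.
  by apply/negP => /eqP y_v; move: (spine_at_mem lt_i); rewrite -y_v ys.
have [e_yp Uy] := parent_spec (negbT ys).
rewrite andbT /=; apply/eqP/idP => [<-|e_vy].
  by rewrite spine_at_pos ys e_sym.
have p_y : spine_at i = parent y by apply: Uy; rewrite e_sym.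
by rewrite -(spine_pos_at lt_i) p_y /spine_pos ys parent_mem ?ys.
Qed.

Lemma card_block_set j : #|block_set j| = block_sum (beta e s) c j.
Proof.
rewrite /block_sum size_map -sum1_card.
rewrite (partition_big (fun y => Ordinal (spine_pos_lt y))
                       (fun i : 'I_(size s) => block_of i == j)) /=;
  last by move=> y; rewrite inE.
rewrite big_mkcond /= big_mkord; apply: eq_bigr => i _.
rewrite -/(block_of i); case: ifP => // /eqP b_i.
rewrite -card_spine_pos // -sum1_card; apply: eq_bigl => y.
rewrite !inE -val_eqE /=; apply/andP/idP => [[] //|/eqP p_y].
by rewrite p_y b_i.
Qed.

Lemma lambda_cut_edges : lambdaA cut_edges = sort geq (glue (beta e s) c).
Proof.
rewrite /lambdaA (glue_block_sum (c := c)) ?size_map //; last first.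
  by move: s_neq_nil; case: (s).
apply/perm_sortP.
- by move=> a b; apply: leq_total.
- by move=> a b d le_ba le_db; apply: leq_trans le_db le_ba.
- by move=> a b /andP[le_ba le_ab]; apply/anti_leq/andP.
rewrite (perm_trans (perm_map (fun C : {set V} => #|C|) perm_components_cut)) //.
by rewrite -map_comp (eq_map card_block_set).
Qed.

End Cut.

Lemma mem_edges x y : ([set x; y] \in edges e) = e x y.
Proof.
apply/imset2P/idP; last by move=> e_xy; exists x y; rewrite ?inE.
case=> a b _; rewrite inE => e_ab /eq_set2 [[-> ->]|[-> ->]] //.
by rewrite e_sym.
Qed.

Lemma cut_edges_sub c : cut_edges c \subset edges e.
Proof.
apply/subsetP => E /imset2P [a b _]; rewrite inE => /andP [e_ab _] ->.
by rewrite mem_edges.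
Qed.

Lemma mem_cut_edges_spine c i : i.+1 < size s ->
  ([set spine_at i; spine_at i.+1] \in cut_edges c) = ~~ nth false c i.
Proof.
move=> lt_i; have lt_i' := ltnW lt_i.
rewrite mem_cut_edges spine_edge ?eqxx //=.
by rewrite /uncut !spine_at_mem // !spine_pos_at // minnSn.
Qed.

Lemma cut_edges_inj : injective (fun c : ((size s).-1).-tuple bool => cut_edges c).
Proof.
move=> c1 c2 E; apply: val_inj; apply: (@eq_from_nth _ false).
  by rewrite !size_tuple.
move=> i; rewrite size_tuple => lt_i.
have lt_i' : i.+1 < size s by move: lt_i; case: (size s).
by apply/negb_inj; rewrite -!mem_cut_edges_spine // E.
Qed.

Lemma parent_edge_mem (A : {set {set V}}) y :
  A \subset edges e -> 1 \notin lambdaA A -> y \notin s -> [set parent y; y] \in A.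
Proof.
move=> sAE A1 ys; apply/negPn/negP => /negP nAy.
have [_ Uy] := parent_spec ys.
have comp_y : [set z | connect (sub_rel A) y z] = [set y].
  apply/setP => z; rewrite !inE; apply/idP/idP; last by move/eqP ->; exact: connect0.
  apply: (@connect_stable _ _ (pred1 y) y z); last exact: eqxx.
  move=> a b A_ab /eqP a_y; subst a; exfalso.
  have e_yb : e y b by rewrite -mem_edges; apply: (subsetP sAE).
  by move: A_ab; rewrite /sub_rel (Uy _ e_yb) setUC.
move/negP: A1; apply; rewrite /lambdaA mem_sort; apply/mapP.
exists [set y]; last by rewrite cards1.
by rewrite mem_enum -comp_y; apply: imset_f.
Qed.

Definition cut_of (A : {set {set V}}) :=
  mkseq (fun i => [set spine_at i; spine_at i.+1] \notin A) (size s).-1.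

Lemma mem_uncut (A : {set {set V}}) x y :
  A \subset edges e -> 1 \notin lambdaA A -> e x y ->
  ([set x; y] \in A) = uncut (cut_of A) x y.
Proof.
move=> sAE A1.
have adj a b : a \in s -> b \in s -> spine_pos b = (spine_pos a).+1 ->
    ([set a; b] \in A) = uncut (cut_of A) a b.
  move=> a_in b_in p_ab.
  have lt_a : (spine_pos a).+1 < size s by rewrite -p_ab spine_pos_lt.
  rewrite /uncut a_in b_in p_ab minnSn /= nth_mkseq; last by move: lt_a; case: (size s).
  by rewrite negbK -p_ab !spine_at_pos a_in b_in.
wlog xs : x y / x \in s.
  move=> W e_xy; case xs: (x \in s); first exact: W.
  rewrite e_sym in e_xy; have [_ ys] := edge_off_spine e_xy (negbT xs).
  by rewrite setUC uncutC; apply: W.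
move=> e_xy; case ys: (y \in s).
  case: (edge_in_spine e_xy xs ys) => p_xy; first exact: adj.
  by rewrite setUC uncutC; apply: adj.
have [_ Uy] := parent_spec (negbT ys).
rewrite /uncut ys andbF /= (Uy x); last by rewrite e_sym.
exact: parent_edge_mem (negbT ys).
Qed.

Lemma cut_of_edges (A : {set {set V}}) : A \subset edges e -> 1 \notin lambdaA A ->
  A = cut_edges (cut_of A).
Proof.
move=> sAE A1; apply/setP => E; apply/idP/idP => EA.
  have /imset2P [x y _] := subsetP sAE _ EA; rewrite inE => e_xy E_xy.
  by move: EA; rewrite E_xy mem_uncut // mem_cut_edges e_xy.
case/imset2P: EA => x y _; rewrite inE => /andP [e_xy u_xy] ->.
by rewrite mem_uncut.
Qed.

Lemma Ucoef_card la : 1 \notin la ->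
  Ucoef e la =
  #|[set c : ((size s).-1).-tuple bool | sort geq (glue (beta e s) c) == la]|.
Proof.
move=> la1; rewrite /Ucoef -(card_imset _ cut_edges_inj).
apply: eq_card => A; rewrite [A \in [set _ in _ | _]]inE inE.
apply/andP/imsetP => [[sAE /eqP lam_A]|[c]].
  have A1 : 1 \notin lambdaA A by rewrite lam_A.
  have size_cut : size (cut_of A) == (size s).-1 by rewrite size_mkseq.
  set c := Tuple size_cut; have A_c : A = cut_edges c := cut_of_edges sAE A1.
  by exists c; rewrite // inE -lam_A A_c lambda_cut_edges // size_tuple.
rewrite inE => /eqP lam_c ->; split; first exact: cut_edges_sub.
by rewrite lambda_cut_edges ?lam_c // size_tuple.
Qed.

End Spine.

Lemma beta_geq2 (V : finType) (e : rel V) s :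
  is_spine e s -> proper_caterpillar e -> all (fun x => 2 <= x) (beta e s).
Proof.
move=> [_ _ mem_s _] proper; rewrite /beta all_map; apply/allP => v vs /=.
have [w /andP[e_vw leaf_w]] := proper v (etrans (esym (mem_s v)) vs).
by rewrite ltnS; apply/card_gt0P; exists w; rewrite inE e_vw.
Qed.

Lemma Lcoef_beta (V : finType) (e : rel V) s la :
  is_spine e s -> proper_caterpillar e ->
  Lcoef (beta e s) la =
  #|[set c : ((size s).-1).-tuple bool | sort geq (glue (beta e s) c) == la]|.
Proof.
move=> s_spine proper; rewrite Lcoef_card ?size_map //.
by apply: sub_all (beta_geq2 s_spine proper) => x /ltnW.
Qed.

Lemma Lcoef_beta_eq0 (V : finType) (e : rel V) s la :
  is_spine e s -> proper_caterpillar e -> 1 \in la -> Lcoef (beta e s) la = 0.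
Proof.
move=> s_spine proper la1; rewrite Lcoef_beta //; apply: eq_card0 => c.
rewrite inE; apply/negP => /eqP lam_c; move: la1; rewrite -lam_c mem_sort.
by move/(allP (all_glue_geq c (beta_geq2 s_spine proper))).
Qed.

Theorem corollary2p4 (V V' : finType) (e : rel V) (e' : rel V') :
  simple_graph e -> simple_graph e' ->
  is_tree e -> is_tree e' ->
  caterpillar e -> proper_caterpillar e -> caterpillar e' -> proper_caterpillar e' ->
  (forall la : seq nat, Ucoef e la = Ucoef e' la) ->
  forall b b' : seq nat, Phi e b -> Phi e' b' ->
  forall la : seq nat, Lcoef b la = Lcoef b' la.
Proof.
move=> [e_sym _] [e'_sym _] [e_conn _] [e'_conn _] _ proper _ proper' U_eq
  b b' [s [s_spine ->]] [s' [s'_spine ->]] la.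
have [la1 | la_n1] := boolP (1 \in la).
  by rewrite (Lcoef_beta_eq0 s_spine proper la1) (Lcoef_beta_eq0 s'_spine proper' la1).
have [x0 _] := exists_mem_spine s_spine; have [x0' _] := exists_mem_spine s'_spine.
rewrite (Lcoef_beta _ s_spine proper) (Lcoef_beta _ s'_spine proper').
by rewrite -(Ucoef_card e_sym e_conn s_spine x0 la_n1)
           -(Ucoef_card e'_sym e'_conn s'_spine x0' la_n1) U_eq.
Qed.
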